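(* Let $\{x_k\}$ be generated by the IR-IG method with positive sequences $\{\gamma_k\}$, $\{\lambda_k\}$, and let $k\ge 1$ be such that $0<\gamma_k\lambda_k\mu_h\le 2m$. Then $$\|x_{k+1}-x_{\lambda_k}^*\|^2\le\left(1-\frac{\gamma_k\lambda_k\mu_h}{2m}\right)\|x_k-x_{\lambda_{k-1}}^*\|^2+\frac{3mC_h^2}{\gamma_k\lambda_k\mu_h^3}\left|1-\frac{\lambda_{k-1}}{\lambda_k}\right|^2+6m^2\gamma_k^2\left(C_f^2+\lambda_k^2C_h^2\right).$$
   Context: Standing setup: $X\subset\mathbb{R}^n$ is nonempty, compact and convex. $f_1,\dots,f_m:\mathbb{R}^n\to\mathbb{R}$ are convex (possibly nondifferentiable) functions and $f=\sum_{i=1}^m f_i$. $h:\mathbb{R}^n\to\mathbb{R}$ is strongly convex with parameter $\mu_h>0$ (possibly nondifferentiable), i.e. $h(y)\ge h(x)+g^T(y-x)+\frac{\mu_h}{2}\|y-x\|^2$ for all $x,y$ and all $g\in\partial h(x)$. For $\lambda>0$, $x_\lambda^*$ denotes the unique minimizer of $f+\lambda h$ over $X$. $C_f,C_h$ are constants such that $\|g\|\le C_f$ for every $g\in\partial f_i(x)$, $i=1,\dots,m$, $x\in X$, and $\|g\|\le C_h$ for every $g\in\partial h(x)$, $x\in X$. $\mathcal{P}_X$ denotes Euclidean projection onto $X$. IR-IG method: given $x_0\in X$ and positive sequences $\{\gamma_k\}$ (step sizes) and $\{\lambda_k\}$ (regularization parameters), for each $k\ge0$ set $x_{k,0}=x_k$;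 for $i=0,\dots,m-1$ pick any $g_{f_{i+1}}(x_{k,i})\in\partial f_{i+1}(x_{k,i})$ and $g_h(x_{k,i})\in\partial h(x_{k,i})$ and set $x_{k,i+1}=\mathcal{P}_X\big(x_{k,i}-\gamma_k\big(g_{f_{i+1}}(x_{k,i})+\tfrac{\lambda_k}{m}g_h(x_{k,i})\big)\big)$; then set $x_{k+1}=x_{k,m}$. *)

From Stdlib Require Import Reals.
From mathcomp Require Import ssreflect ssrfun ssrbool eqtype ssrnat seq fintype bigop.
Open Scope R_scope.

Definition vec (n : nat) := 'I_n -> R.

Definition vadd {n} (x y : vec n) : vec n := fun i => x i + y i.
Definition vsub {n} (x y : vec n) : vec n := fun i => x i - y i.
Definition vscale {n} (a : R) (x : vec n) : vec n := fun i => a * x i.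
Definition dot {n} (x y : vec n) : R := \big[Rplus/0]_(i < n) (x i * y i).
Definition norm2 {n} (x : vec n) : R := dot x x.
Definition norm {n} (x : vec n) : R := sqrt (norm2 x).

Definition convex_set {n} (X : vec n -> Prop) : Prop :=
  forall x y t, X x -> X y -> 0 <= t <= 1 ->
    X (vadd (vscale t x) (vscale (1 - t) y)).
Definition closed_set {n} (X : vec n -> Prop) : Prop :=
  forall (u : nat -> vec n) (x : vec n),
    (forall j, X (u j)) -> Un_cv (fun j => norm (vsub (u j) x)) 0 -> X x.
Definition bounded_set {n} (X : vec n -> Prop) : Prop :=
  exists M, forall x, X x -> norm x <= M.
(* Heine-Borel: compact in R^n = closed and bounded *)
Definition compact_set {n} (X : vec n -> Prop) : Prop :=
  closed_set X /\ bounded_set X.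

Definition convex_fun {n} (f : vec n -> R) : Prop :=
  forall x y t, 0 <= t <= 1 ->
    f (vadd (vscale t x) (vscale (1 - t) y)) <= t * f x + (1 - t) * f y.
Definition subgrad {n} (f : vec n -> R) (x g : vec n) : Prop :=
  forall y, f y >= f x + dot g (vsub y x).
Definition strongly_convex {n} (h : vec n -> R) (mu : R) : Prop :=
  convex_fun h /\
  forall x y g, subgrad h x g ->
    h y >= h x + dot g (vsub y x) + mu / 2 * norm2 (vsub y x).

Definition is_proj {n} (X : vec n -> Prop) (x p : vec n) : Prop :=
  X p /\ forall y, X y -> norm2 (vsub x p) <= norm2 (vsub x y).

Definition is_argmin {n} (X : vec n -> Prop) (F : vec n -> R) (xs : vec n) : Prop :=
  X xs /\ forall y, X y -> F xs <= F y.

(* f = sum_{i=1}^m f_i, with f_{i+1} represented as fs i, i < m *)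
Definition fsum {n} (m : nat) (fs : nat -> vec n -> R) : vec n -> R :=
  fun x => \big[Rplus/0]_(i < m) fs i x.

(* IR-IG iterates: xo k = x_k, z k i = x_{k,i} *)
Definition IRIG {n} (X : vec n -> Prop) (m : nat) (fs : nat -> vec n -> R)
  (h : vec n -> R) (gam lam : nat -> R) (xo : nat -> vec n)
  (z : nat -> nat -> vec n) : Prop :=
  X (xo 0%nat) /\
  forall k, z k 0%nat = xo k /\ xo (S k) = z k m /\
    forall i, (i < m)%nat ->
      exists gf gh, subgrad (fs i) (z k i) gf /\ subgrad h (z k i) gh /\
        is_proj X
          (vsub (z k i) (vscale (gam k)
             (vadd gf (vscale (lam k / INR m) gh))))
          (z k (S i)).

(* Within a cycle, IR-IG performs projected subgradient steps on the components
   f_i + (lambda_k/m) h, each strongly convex with modulus lambda_k mu_h / m and with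
   subgradients bounded on X by L = C_f + (lambda_k/m) C_h.  Since projection onto X
   is nonexpansive, each step contracts the squared distance to y = x*_{lambda_k} up
   to the gap of the component between the current iterate and y; measuring that gap
   at the start x_k of the cycle instead costs at most L * (m gamma_k L), because the
   components are L-Lipschitz on X and the iterates move by at most gamma_k L per
   step.  Summed over the cycle, the gaps become the regularized optimality gap at
   x_k, which strong convexity bounds below by (lambda_k mu_h / 2) ||x_k - y||^2.
   Finally ||x_k - y||^2 is split through x*_{lambda_(k-1)} by Young's inequality,
   and the two regularized minimizers are at distance at most
   2 |lambda_k - lambda_(k-1)| C_h / (lambda_k mu_h), by adding their optimality
   inequalities.  The Lipschitz bounds need subgradients of finite convex functions on
   R^n to exist; they are built one coordinate at a time by a one-dimensional
   Hahn-Banach argument. *)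

From HB Require Import structures.
From Stdlib Require Import Reals Lra Psatz FunctionalExtensionality.
From mathcomp Require Import ssreflect ssrfun ssrbool eqtype ssrnat seq fintype bigop.
Open Scope R_scope.

HB.instance Definition _ :=
  Monoid.isComLaw.Build R 0 Rplus (fun a b c => esym (Rplus_assoc a b c)) Rplus_comm Rplus_0_l.

Ltac vec_ext := apply: functional_extensionality => ?; rewrite /vadd /vsub /vscale; ring.

Lemma nonpos_of_le_small_multiples (A C : R) :
  (forall t, 0 < t <= 1 -> A <= t * C) -> A <= 0.
Proof.
move=> H; apply: Rnot_lt_le => hA.
have hC : 0 < C by have := H 1 ltac:(lra); lra.
pose t := Rmin 1 (A / (2 * C)).
have ht : 0 < t <= 1.
  split; last exact: Rmin_l.
  by apply: Rmin_glb_lt; [lra | apply: Rdiv_lt_0_compat; lra].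
have : t * C <= A / (2 * C) * C by apply: Rmult_le_compat_r; [lra | exact: Rmin_r].
have -> : A / (2 * C) * C = A / 2 by field; lra.
have := H t ht; lra.
Qed.

Lemma sup_between (A B : R -> Prop) :
  (exists a, A a) -> (exists b, B b) -> (forall a b, A a -> B b -> a <= b) ->
  exists c, (forall a, A a -> a <= c) /\ (forall b, B b -> c <= b).
Proof.
move=> [a0 Aa0] [b0 Bb0] AB.
have [c [ub lub]] := completeness A (ex_intro _ b0 (fun a Aa => AB a b0 Aa Bb0)) (ex_intro _ a0 Aa0).
by exists c; split=> // b Bb; apply: lub => a Aa; exact: AB.
Qed.

Lemma discriminant_le (A B C : R) : 0 <= A -> 0 <= C ->
  (forall t, 0 <= A - 2 * t * B + t ^ 2 * C) -> B ^ 2 <= A * C.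
Proof.
move=> hA hC H.
have [hC0|hCp] : C = 0 \/ 0 < C by lra.
- have [hB0|hB] : B = 0 \/ B <> 0 by lra.
    by rewrite hB0; nra.
  have := H ((A + 1) / (2 * B)); rewrite hC0.
  have -> : 2 * ((A + 1) / (2 * B)) * B = A + 1 by field.
  lra.
- have := H (B / C).
  have -> : A - 2 * (B / C) * B + (B / C) ^ 2 * C = (A * C - B ^ 2) / C by field; lra.
  move=> h; have : 0 <= (A * C - B ^ 2) / C * C by nra.
  have -> : (A * C - B ^ 2) / C * C = A * C - B ^ 2 by field; lra.
  lra.
Qed.

Lemma big_Rmult_l (c : R) (k : nat) (F : 'I_k -> R) :
  \big[Rplus/0]_(i < k) (c * F i) = c * \big[Rplus/0]_(i < k) F i.
Proof.
apply: (big_ind2 (fun a b => a = c * b)) => [|a1 a2 b1 b2 -> ->|//]; [ring | ring].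
Qed.

(** * Euclidean geometry of [vec n] *)

Section Vectors.
Context {n : nat}.
Implicit Types x y u v w g : vec n.

Lemma dot_comm x y : dot x y = dot y x.
Proof. by apply: eq_bigr => i _; ring. Qed.

Lemma dot_addl x y w : dot (vadd x y) w = dot x w + dot y w.
Proof. by rewrite /dot -big_split; apply: eq_bigr => i _; rewrite /vadd /=; ring. Qed.

Lemma dot_scalel c x w : dot (vscale c x) w = c * dot x w.
Proof. by rewrite /dot -big_Rmult_l; apply: eq_bigr => i _; rewrite /vscale /=; ring. Qed.

Lemma dot_subl x y w : dot (vsub x y) w = dot x w - dot y w.
Proof.
have -> : vsub x y = vadd x (vscale (-1) y) by vec_ext.
by rewrite dot_addl dot_scalel; ring.
Qed.

Lemma dot_addr x y w : dot w (vadd x y) = dot w x + dot w y.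
Proof. by rewrite dot_comm dot_addl !(dot_comm w). Qed.

Lemma dot_scaler c x w : dot w (vscale c x) = c * dot w x.
Proof. by rewrite dot_comm dot_scalel (dot_comm w). Qed.

Lemma dot_subr x y w : dot w (vsub x y) = dot w x - dot w y.
Proof. by rewrite dot_comm dot_subl !(dot_comm w). Qed.

Lemma norm2_ge0 x : 0 <= norm2 x.
Proof.
by apply: (big_ind (fun a => 0 <= a)) => [|a b|i _]; [lra | lra | nra].
Qed.

Lemma norm2_add x y : norm2 (vadd x y) = norm2 x + 2 * dot x y + norm2 y.
Proof. by rewrite /norm2 dot_addl !dot_addr (dot_comm y x); ring. Qed.

Lemma norm2_sub x y : norm2 (vsub x y) = norm2 x - 2 * dot x y + norm2 y.
Proof. by rewrite /norm2 dot_subl !dot_subr (dot_comm y x); ring. Qed.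

Lemma norm2_scale c x : norm2 (vscale c x) = c ^ 2 * norm2 x.
Proof. by rewrite /norm2 dot_scalel dot_scaler; ring. Qed.

Lemma norm2_subC x y : norm2 (vsub x y) = norm2 (vsub y x).
Proof. by rewrite !norm2_sub (dot_comm x y); ring. Qed.

Lemma norm2_add_le (e : R) x y : 0 < e ->
  norm2 (vadd x y) <= (1 + e) * norm2 x + (1 + / e) * norm2 y.
Proof.
move=> he; have := norm2_ge0 (vsub (vscale e x) y).
rewrite norm2_add norm2_sub norm2_scale dot_scalel => h.
have : 2 * dot x y <= e * norm2 x + / e * norm2 y.
  apply: (Rmult_le_reg_l e) => //.
  have -> : e * (e * norm2 x + / e * norm2 y) = e ^ 2 * norm2 x + norm2 y by field; lra.
  lra.
lra.
Qed.

Lemma norm2_add_shrink {a b : R} u w : 0 < a <= 1 -> 4 * a <= b ->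
  (1 - b) * norm2 (vadd u w) <= (1 - a) * norm2 u + norm2 w / (3 * a).
Proof.
move=> ha hb; have hu := norm2_ge0 u; have hw := norm2_ge0 w.
have hw3 : 0 <= norm2 w / (3 * a).
  by apply: Rmult_le_pos => //; apply: Rlt_le; apply: Rinv_0_lt_compat; lra.
have [b1|b1] : 1 <= b \/ b < 1 by lra.
  by have := norm2_ge0 (vadd u w); nra.
(* Young's inequality with weight [(b - a) / (1 - b)] *)
set e := (b - a) / (1 - b).
have he : 0 < e by apply: Rdiv_lt_0_compat; lra.
have := Rmult_le_compat_l (1 - b) _ _ ltac:(lra) (norm2_add_le e u w he).
have -> : (1 - b) * ((1 + e) * norm2 u + (1 + / e) * norm2 w)
          = (1 - a) * norm2 u + (1 - b) * (1 - a) / (b - a) * norm2 w.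
  by rewrite /e; field; lra.
have : (1 - b) * (1 - a) / (b - a) <= / (3 * a).
  apply: (Rmult_le_reg_r ((b - a) * (3 * a))); first nra.
  by field_simplify; nra.
rewrite /Rdiv; nra.
Qed.

Lemma norm_ge0 x : 0 <= norm x.
Proof. exact: sqrt_pos. Qed.

Lemma norm_sq x : norm x ^ 2 = norm2 x.
Proof. by rewrite /norm /= Rmult_1_r sqrt_sqrt //; exact: norm2_ge0. Qed.

Lemma norm_le_norm2 x y : norm2 x <= norm2 y -> norm x <= norm y.
Proof. exact: sqrt_le_1_alt. Qed.

Lemma norm_subC x y : norm (vsub x y) = norm (vsub y x).
Proof. by rewrite /norm norm2_subC. Qed.

Lemma norm_scale c x : norm (vscale c x) = Rabs c * norm x.
Proof.
rewrite /norm norm2_scale sqrt_mult; [|exact: pow2_ge_0|exact: norm2_ge0].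
by rewrite -Rsqr_pow2 sqrt_Rsqr_abs.
Qed.

Lemma dot_le_norm_mul x y : dot x y <= norm x * norm y.
Proof.
have hd : dot x y ^ 2 <= norm2 x * norm2 y.
  apply: discriminant_le; [exact: norm2_ge0 | exact: norm2_ge0 | move=> t].
  have := norm2_ge0 (vsub x (vscale t y)).
  by rewrite norm2_sub norm2_scale dot_scaler /norm2; lra.
rewrite -!norm_sq -Rpow_mult_distr in hd.
have := Rmult_le_pos _ _ (norm_ge0 x) (norm_ge0 y); nra.
Qed.

Lemma norm_add_le x y : norm (vadd x y) <= norm x + norm y.
Proof.
have hx := norm_ge0 x; have hy := norm_ge0 y.
have h : norm (vadd x y) ^ 2 <= (norm x + norm y) ^ 2.
  by rewrite norm_sq norm2_add -(norm_sq x) -(norm_sq y); have := dot_le_norm_mul x y; nra.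
have := norm_ge0 (vadd x y); nra.
Qed.


Lemma proj_obtuse {X : vec n -> Prop} {u p y : vec n} : convex_set X -> is_proj X u p -> X y ->
  dot (vsub u p) (vsub y p) <= 0.
Proof.
move=> cX [Xp Hp] Xy.
apply: (nonpos_of_le_small_multiples _ (norm2 (vsub y p) / 2)) => t ht.
have := Hp _ (cX y p t Xy Xp ltac:(lra)).
have -> : vsub u (vadd (vscale t y) (vscale (1 - t) p)) =
          vsub (vsub u p) (vscale t (vsub y p)) by vec_ext.
rewrite (norm2_sub (vsub u p)) norm2_scale dot_scaler => h.
apply: (Rmult_le_reg_l (2 * t)); nra.
Qed.

Lemma proj_norm2_le {X : vec n -> Prop} {u p y : vec n} : convex_set X -> is_proj X u p -> X y ->
  norm2 (vsub p y) <= norm2 (vsub u y).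
Proof.
move=> cX hp Xy; have := proj_obtuse cX hp Xy.
have -> : vsub u y = vsub (vsub u p) (vsub y p) by vec_ext.
rewrite (norm2_sub (vsub u p)) (norm2_subC p y); have := norm2_ge0 (vsub u p); lra.
Qed.

(** * Subgradients of finite convex functions *)

Definition vanish_from (j : nat) v := forall i : 'I_n, (j <= i)%N -> v i = 0.

Definition unit_vec (j0 : 'I_n) : vec n := fun i => if i == j0 then 1 else 0.

Lemma dot_unit_vec j0 v : dot (unit_vec j0) v = v j0.
Proof.
rewrite /dot (bigD1 j0) //= big1 /unit_vec ?eqxx /=; first ring.
by move=> i /negbTE ->; ring.
Qed.

(* [q] is the excess of [f] over the affine minorant with slope [g], which is valid
   on the vectors supported on the first [j] coordinates.  By convexity, every left
   difference quotient of [q] along the next coordinate direction [e] lies below every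
   right one; any slope [c] in between extends the minorant to one more coordinate. *)
Section SubgradientExtension.
Variables (f : vec n -> R) (x0 g : vec n) (j : nat) (hj : (j < n)%N).
Hypothesis cf : convex_fun f.
Hypothesis hg : forall v, vanish_from j v -> f (vadd x0 v) >= f x0 + dot g v.

Let j0 : 'I_n := Ordinal hj.
Let e := unit_vec j0.
Let q v := f (vadd x0 v) - f x0 - dot g v.

Lemma excess_convex a b t : 0 <= t <= 1 ->
  q (vadd (vscale t a) (vscale (1 - t) b)) <= t * q a + (1 - t) * q b.
Proof.
move=> ht; rewrite /q.
have -> : vadd x0 (vadd (vscale t a) (vscale (1 - t) b)) =
          vadd (vscale t (vadd x0 a)) (vscale (1 - t) (vadd x0 b)) by vec_ext.
have := cf (vadd x0 a) (vadd x0 b) _ ht.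
rewrite dot_addr !dot_scaler; lra.
Qed.

Lemma excess_slopes v w s t : vanish_from j v -> vanish_from j w -> 0 < s -> 0 < t ->
  - q (vsub v (vscale s e)) / s <= q (vadd w (vscale t e)) / t.
Proof.
move=> hv hw hs ht.
set q1 := q (vsub v (vscale s e)); set q2 := q (vadd w (vscale t e)).
set lam := t / (s + t).
have hlam : 0 <= lam <= 1.
  rewrite /lam; split; first by apply: Rlt_le; apply: Rdiv_lt_0_compat; lra.
  by apply: (Rmult_le_reg_r (s + t)); [lra | field_simplify; lra].
have hmix : vanish_from j (vadd (vscale lam (vsub v (vscale s e)))
                                (vscale (1 - lam) (vadd w (vscale t e)))).
  move=> i hi; rewrite /vadd /vscale /vsub hv // hw // /e /unit_vec /lam.
  by case: (i == j0); field; lra.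
have := hg _ hmix; have := excess_convex (vsub v (vscale s e)) (vadd w (vscale t e)) _ hlam.
rewrite -/q1 -/q2 /q => hc hq.
have : 0 <= (s + t) / (s * t) * (lam * q1 + (1 - lam) * q2).
  by apply: Rmult_le_pos; [apply: Rlt_le; apply: Rdiv_lt_0_compat; nra | lra].
have -> : (s + t) / (s * t) * (lam * q1 + (1 - lam) * q2) = q1 / s + q2 / t.
  by rewrite /lam; field; lra.
have -> : - q1 / s = - (q1 / s) by field; lra.
lra.
Qed.

Lemma subgrad_extend :
  exists g', forall v, vanish_from j.+1 v -> f (vadd x0 v) >= f x0 + dot g' v.
Proof.
pose A c := exists v s, vanish_from j v /\ 0 < s /\ c = - q (vsub v (vscale s e)) / s.
pose B c := exists w t, vanish_from j w /\ 0 < t /\ c = q (vadd w (vscale t e)) / t.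
have v0 : vanish_from j (fun _ => 0) by [].
have [c [Ac Bc]] : exists c, (forall a, A a -> a <= c) /\ (forall b, B b -> c <= b).
  apply: sup_between.
  - by exists (- q (vsub (fun _ => 0) (vscale 1 e)) / 1), (fun _ => 0), 1; split=> //; split; [lra|].
  - by exists (q (vadd (fun _ => 0) (vscale 1 e)) / 1), (fun _ => 0), 1; split=> //; split; [lra|].
  by move=> _ _ [v [s [hv [hs ->]]]] [w [t [hw [ht ->]]]]; exact: excess_slopes.
exists (vadd g (vscale c e)) => v hv.
set t := v j0; set v' := vsub v (vscale t e).
have hv' : vanish_from j v'.
  move=> i hi; rewrite /v' /vsub /vscale /e /unit_vec.
  case: eqP => [->|ne]; first by rewrite /t; ring.
  rewrite hv; first ring.
  rewrite ltn_neqAle hi andbT; apply/eqP => eji; apply: ne; apply: val_inj; by rewrite /= -eji.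
have ct : c * t <= q v.
  have [tn|[t0|tp]] := Rtotal_order t 0.
  - have hs : 0 < - t by lra.
    have ev : v = vsub v' (vscale (- t) e) by rewrite /v'; vec_ext.
    have : - q v / (- t) <= c by apply: Ac; exists v', (- t); rewrite -ev.
    move/(Rmult_le_compat_r (- t) _ _ (Rlt_le _ _ hs)).
    rewrite (_ : - q v / (- t) * (- t) = - q v); [lra | field; lra].
  - have -> : v = v' by rewrite /v' t0; vec_ext.
    by rewrite t0 Rmult_0_r; have := hg _ hv'; rewrite /q; lra.
  - have ev : v = vadd v' (vscale t e) by rewrite /v'; vec_ext.
    have : c <= q v / t by apply: Bc; exists v', t; rewrite -ev.
    move/(Rmult_le_compat_r t _ _ (Rlt_le _ _ tp)).
    rewrite (_ : q v / t * t = q v); [lra | field; lra].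
rewrite dot_addl dot_scalel dot_unit_vec -/t; move: ct; rewrite /q; lra.
Qed.

End SubgradientExtension.

Lemma subgrad_exists {f : vec n -> R} x0 : convex_fun f -> exists g, subgrad f x0 g.
Proof.
move=> cf.
have ind j : (j <= n)%N ->
    exists g, forall v, vanish_from j v -> f (vadd x0 v) >= f x0 + dot g v.
  elim: j => [|j IH] hj.
    exists x0 => v hv.
    have -> : vadd x0 v = x0 by apply: functional_extensionality => i; rewrite /vadd hv //; ring.
    rewrite /dot big1; first lra.
    by move=> i _; rewrite hv //; ring.
  have [g hg] := IH (ltnW hj).
  exact: (@subgrad_extend f x0 g j hj cf hg).
have [g hg] := ind n (leqnn n).
exists g => y.
have := hg (vsub y x0).
have -> : vadd x0 (vsub y x0) = y by vec_ext.
by apply=> i hi; have := leq_ltn_trans hi (ltn_ord i); rewrite ltnn.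
Qed.

Lemma subgrad_lipschitz {X : vec n -> Prop} {f : vec n -> R} {C : R} a {b : vec n} :
  convex_fun f -> (forall x g, X x -> subgrad f x g -> norm g <= C) -> X b ->
  f b - f a <= C * norm (vsub b a).
Proof.
move=> cf hC Xb; have [g hg] := subgrad_exists b cf.
have hgC := hC _ _ Xb hg; have hab := norm_ge0 (vsub b a).
have := hg a; have := dot_le_norm_mul g (vsub b a).
rewrite !dot_subr; nra.
Qed.

Lemma subgrad_bound_ge0 {X : vec n -> Prop} {f : vec n -> R} {C : R} {x : vec n} :
  convex_fun f -> (forall x g, X x -> subgrad f x g -> norm g <= C) -> X x -> 0 <= C.
Proof.
move=> cf hC Xx; have [g hg] := subgrad_exists x cf.
exact: Rle_trans (norm_ge0 g) (hC _ _ Xx hg).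
Qed.

(** * Strongly convex regularization *)

Definition strong_subgrad (f : vec n -> R) (mu : R) x g :=
  forall y, f y >= f x + dot g (vsub y x) + mu / 2 * norm2 (vsub y x).

Lemma strong_subgrad_add_scale (f h : vec n -> R) (mu c : R) x gf gh :
  0 <= c -> subgrad f x gf -> strongly_convex h mu -> subgrad h x gh ->
  strong_subgrad (fun y => f y + c * h y) (c * mu) x (vadd gf (vscale c gh)).
Proof.
move=> hc hf [_ sh] hh y.
have := Rmult_ge_compat_l c _ _ (Rle_ge _ _ hc) (sh x y gh hh).
have := hf y; rewrite dot_addl dot_scalel; lra.
Qed.

Lemma strongly_convex_segment {h : vec n -> R} {mu t : R} y z :
  strongly_convex h mu -> 0 <= t <= 1 ->
  h (vadd (vscale t z) (vscale (1 - t) y)) + mu / 2 * (t * (1 - t)) * norm2 (vsub z y)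
    <= t * h z + (1 - t) * h y.
Proof.
move=> [ch sh] ht; set yt := vadd (vscale t z) (vscale (1 - t) y).
have [g hg] := subgrad_exists yt ch.
have s1 := sh yt y g hg; have s2 := sh yt z g hg.
rewrite (_ : vsub y yt = vscale (- t) (vsub z y)) in s1; last by rewrite /yt; vec_ext.
rewrite (_ : vsub z yt = vscale (1 - t) (vsub z y)) in s2; last by rewrite /yt; vec_ext.
rewrite dot_scaler norm2_scale in s1; rewrite dot_scaler norm2_scale in s2.
have := Rmult_ge_compat_l (1 - t) _ _ ltac:(lra) s1.
have := Rmult_ge_compat_l t _ _ ltac:(lra) s2.
lra.
Qed.

Lemma argmin_growth {X : vec n -> Prop} {phi h : vec n -> R} {l mu : R} {y z : vec n} :
  convex_set X -> convex_fun phi -> strongly_convex h mu -> 0 < l ->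
  is_argmin X (fun x => phi x + l * h x) y -> X z ->
  l * mu / 2 * norm2 (vsub z y) <= phi z + l * h z - (phi y + l * h y).
Proof.
move=> cX cphi sh hl [Xy Hy] Xz.
set N := norm2 (vsub z y); set D := phi z + l * h z - (phi y + l * h y).
suff : l * mu / 2 * N - D <= 0 by lra.
apply: (nonpos_of_le_small_multiples _ (l * mu / 2 * N)) => t ht.
have ht' : 0 <= t <= 1 by lra.
have := Hy _ (cX z y t Xz Xy ht').
have := strongly_convex_segment y z sh ht'.
have := cphi z y t ht'.
set yt := vadd (vscale t z) (vscale (1 - t) y) => hphi hh hmin.
have := Rmult_le_compat_l l _ _ (Rlt_le _ _ hl) hh => hlh.
have key : t * (l * mu / 2 * N * (1 - t)) <= t * D by rewrite /D /N; lra.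
have := Rmult_le_reg_l t _ _ (proj1 ht) key; lra.
Qed.

Lemma argmin_drift {X : vec n -> Prop} {phi h : vec n -> R} {l l' mu C : R} {y y' : vec n} :
  convex_set X -> convex_fun phi -> strongly_convex h mu -> 0 < mu -> 0 < l -> 0 < l' ->
  (forall x g, X x -> subgrad h x g -> norm g <= C) ->
  is_argmin X (fun x => phi x + l * h x) y -> is_argmin X (fun x => phi x + l' * h x) y' ->
  l * mu * norm (vsub y' y) <= 2 * Rabs (l - l') * C.
Proof.
move=> cX cphi sh hmu hl hl' hC hy hy'.
have Xy := proj1 hy; have Xy' := proj1 hy'.
have g1 := argmin_growth cX cphi sh hl hy Xy'.
have g2 := argmin_growth cX cphi sh hl' hy' Xy.
have hC0 := subgrad_bound_ge0 (proj1 sh) hC Xy.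
have l1 := subgrad_lipschitz y (proj1 sh) hC Xy'.
have l2 := subgrad_lipschitz y' (proj1 sh) hC Xy.
rewrite norm2_subC -norm_sq in g2; rewrite -norm_sq in g1.
rewrite norm_subC in l2.
set w := norm (vsub y' y) in g1 g2 l1 l2 *.
have hw := norm_ge0 (vsub y' y); rewrite -/w in hw.
have hsep : (l + l') * mu / 2 * w ^ 2 <= Rabs (l - l') * (C * w).
  have hdiff : (l + l') * mu / 2 * w ^ 2 <= (l - l') * (h y' - h y) by lra.
  apply: (Rle_trans _ _ _ hdiff); apply: (Rle_trans _ _ _ (Rle_abs _)).
  rewrite Rabs_mult; apply: Rmult_le_compat_l; first exact: Rabs_pos.
  by apply: Rabs_le; lra.
have [w0|wp] : w = 0 \/ 0 < w by lra.
  by rewrite w0 Rmult_0_r; have := Rabs_pos (l - l'); nra.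
have : (l + l') * mu / 2 * w <= Rabs (l - l') * C.
  by apply: (Rmult_le_reg_r w) => //; nra.
have : l * mu * w <= (l + l') * mu * w by apply: Rmult_le_compat_r; nra.
lra.
Qed.

Lemma fsumS (m : nat) (fs : nat -> vec n -> R) x : fsum m.+1 fs x = fsum m fs x + fs m x.
Proof. by rewrite /fsum big_ord_recr. Qed.

Lemma fsum_convex {m : nat} {fs : nat -> vec n -> R} :
  (forall i, (i < m)%N -> convex_fun (fs i)) -> convex_fun (fsum m fs).
Proof.
elim: m => [|m IH] H x y t ht.
  by rewrite /fsum !big_ord0; lra.
rewrite !fsumS.
have := IH (fun i hi => H i (ltnW hi)) x y t ht; have := H m (ltnSn m) x y t ht.
lra.
Qed.

Lemma big_component_gap (m : nat) (fs : nat -> vec n -> R) (h : vec n -> R) (c : R) a b :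
  \big[Rplus/0]_(i < m) ((fs i a + c * h a) - (fs i b + c * h b))
    = fsum m fs a + INR m * c * h a - (fsum m fs b + INR m * c * h b).
Proof.
elim: m => [|m IH]; first by rewrite /fsum !big_ord0 /=; ring.
by rewrite S_INR big_ord_recr /= IH !fsumS; ring.
Qed.

End Vectors.

(** * One cycle of incremental projected subgradient steps *)

Section IncrementalCycle.
Variables (n m : nat) (X : vec n -> Prop) (phi : nat -> vec n -> R) (mu L gm : R).
Variable x : nat -> vec n.
Hypotheses (cX : convex_set X) (hmu : 0 <= mu) (hgm : 0 < gm) (hL : 0 <= L) (X0 : X (x 0%N)).
Hypothesis phi_lip : forall i a b, (i < m)%N -> X b -> phi i b - phi i a <= L * norm (vsub b a).
Hypothesis cycle_step : forall i, (i < m)%N -> exists G,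
  strong_subgrad (phi i) mu (x i) G /\ norm G <= L /\ is_proj X (vsub (x i) (vscale gm G)) (x i.+1).

Lemma cycle_in_X {i} : (i <= m)%N -> X (x i).
Proof. by case: i => [//|i] hi; have [G [_ [_ [Xi _]]]] := cycle_step _ hi. Qed.

Lemma cycle_move_le {i} : (i < m)%N -> norm (vsub (x i.+1) (x i)) <= gm * L.
Proof.
move=> hi; have [G [_ [hG hp]]] := cycle_step _ hi.
have := proj_norm2_le cX hp (cycle_in_X (ltnW hi)).
have -> : vsub (vsub (x i) (vscale gm G)) (x i) = vscale (- gm) G by vec_ext.
move/norm_le_norm2; rewrite norm_scale Rabs_Ropp Rabs_pos_eq; last lra.
have := Rmult_le_compat_l gm _ _ (Rlt_le _ _ hgm) hG; lra.
Qed.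

Lemma cycle_dist_le {i} : (i <= m)%N -> norm (vsub (x i) (x 0%N)) <= INR i * gm * L.
Proof.
elim: i => [|i IH] hi.
  have -> : vsub (x 0%N) (x 0%N) = vscale 0 (x 0%N) by vec_ext.
  by rewrite norm_scale Rabs_R0 /=; lra.
have -> : vsub (x i.+1) (x 0%N) = vadd (vsub (x i.+1) (x i)) (vsub (x i) (x 0%N)) by vec_ext.
have := norm_add_le (vsub (x i.+1) (x i)) (vsub (x i) (x 0%N)).
have := cycle_move_le hi; have := IH (ltnW hi); rewrite S_INR; lra.
Qed.

Lemma cycle_descent {y i} : X y -> (i < m)%N ->
  norm2 (vsub (x i.+1) y) <= (1 - gm * mu) * norm2 (vsub (x i) y)
    - 2 * gm * (phi i (x 0%N) - phi i y) + (2 * INR m + 1) * gm ^ 2 * L ^ 2.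
Proof.
move=> Xy hi; have [G [sG [hG hp]]] := cycle_step _ hi.
have hproj := proj_norm2_le cX hp Xy.
rewrite (_ : vsub (vsub (x i) (vscale gm G)) y = vsub (vsub (x i) y) (vscale gm G)) in hproj;
  last by vec_ext.
rewrite (norm2_sub (vsub (x i) y)) norm2_scale dot_scaler in hproj.
have hsg := sG y.
rewrite (norm2_subC y) (_ : dot G (vsub y (x i)) = - dot (vsub (x i) y) G) in hsg;
  last by rewrite dot_subr dot_subl !(dot_comm G); ring.
have hG2 : gm ^ 2 * norm2 G <= gm ^ 2 * L ^ 2.
  apply: Rmult_le_compat_l; first exact: pow2_ge_0.
  by rewrite -norm_sq; apply: pow_incr; split; [exact: norm_ge0 | done].
have hlip := phi_lip _ (x i) _ hi X0; rewrite norm_subC in hlip.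
have hr : L * norm (vsub (x i) (x 0%N)) <= L * (INR m * gm * L).
  apply: Rmult_le_compat_l => //; apply: Rle_trans (cycle_dist_le (ltnW hi)) _.
  have : INR i <= INR m by apply: le_INR; apply/leP; exact: ltnW.
  by move=> hiM; apply: Rmult_le_compat_r => //; apply: Rmult_le_compat_r; lra.
have hphi : phi i (x 0%N) - phi i (x i) <= L * (INR m * gm * L) by lra.
have := Rmult_le_compat_l (2 * gm) _ _ ltac:(lra) hphi.
have : 2 * gm * (phi i (x i) - phi i y + mu / 2 * norm2 (vsub (x i) y))
       <= 2 * gm * dot (vsub (x i) y) G.
  by apply: Rmult_le_compat_l; lra.
have -> : (2 * INR m + 1) * gm ^ 2 * L ^ 2 = 2 * gm * (L * (INR m * gm * L)) + gm ^ 2 * L ^ 2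
  by ring.
lra.
Qed.

Lemma cycle_bound y : (0 < m)%N -> X y ->
  norm2 (vsub (x m) y) <= (1 - gm * mu) * norm2 (vsub (x 0%N) y)
    - 2 * gm * \big[Rplus/0]_(i < m) (phi i (x 0%N) - phi i y)
    + INR m * ((2 * INR m + 1) * gm ^ 2 * L ^ 2).
Proof.
move=> hm Xy; set E := (2 * INR m + 1) * gm ^ 2 * L ^ 2.
suff H j : (j < m)%N -> norm2 (vsub (x j.+1) y) <= (1 - gm * mu) * norm2 (vsub (x 0%N) y)
    - 2 * gm * \big[Rplus/0]_(i < j.+1) (phi i (x 0%N) - phi i y) + INR j.+1 * E.
  by have := H m.-1; rewrite prednK //; apply.
elim: j => [|j IH] hj.
  by rewrite big_ord_recr big_ord0 /=; have := cycle_descent Xy hj; rewrite -/E; lra.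
have hD : 0 <= gm * mu * norm2 (vsub (x j.+1) y).
  by apply: Rmult_le_pos; [apply: Rmult_le_pos; lra | exact: norm2_ge0].
have := IH (ltnW hj); have := cycle_descent Xy hj.
rewrite !S_INR (big_ord_recr j.+1) /= -/E; lra.
Qed.

End IncrementalCycle.

Lemma drift_term_le {M gm lm lm' mu C w : R} :
  0 < M -> 0 < gm -> 0 < lm -> 0 < mu -> 0 <= w ->
  lm * mu * w <= 2 * Rabs (lm - lm') * C ->
  w ^ 2 / (3 * (gm * lm * mu / (2 * M)))
    <= 3 * M * C ^ 2 / (gm * lm * mu ^ 3) * Rabs (1 - lm' / lm) ^ 2.
Proof.
move=> hM hg hl hmu hw hd.
have hsq : (lm * mu * w) ^ 2 <= 4 * (lm - lm') ^ 2 * C ^ 2.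
  have -> : 4 * (lm - lm') ^ 2 * C ^ 2 = (2 * Rabs (lm - lm') * C) ^ 2.
    by rewrite -(pow2_abs (lm - lm')); ring.
  apply: pow_incr; split => //; apply: Rmult_le_pos; [apply: Rmult_le_pos|]; lra.
have hK : 0 < gm * lm ^ 3 * mu ^ 3.
  by apply: Rmult_lt_0_compat; [apply: Rmult_lt_0_compat|]; try apply: pow_lt.
rewrite pow2_abs.
have -> : w ^ 2 / (3 * (gm * lm * mu / (2 * M)))
          = 2 * M / 3 * (lm * mu * w) ^ 2 / (gm * lm ^ 3 * mu ^ 3) by field; lra.
have -> : 3 * M * C ^ 2 / (gm * lm * mu ^ 3) * (1 - lm' / lm) ^ 2
          = 3 * M * ((lm - lm') ^ 2 * C ^ 2) / (gm * lm ^ 3 * mu ^ 3) by field; lra.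
apply: Rmult_le_compat_r; first by apply: Rlt_le; apply: Rinv_0_lt_compat.
have := pow2_ge_0 (lm - lm'); have := pow2_ge_0 C; nra.
Qed.

Lemma noise_term_le {M} gm {lm Cf Ch : R} : 1 <= M -> 0 <= lm -> 0 <= Cf -> 0 <= Ch ->
  M * ((2 * M + 1) * gm ^ 2 * (Cf + lm / M * Ch) ^ 2)
    <= 6 * M ^ 2 * gm ^ 2 * (Cf ^ 2 + lm ^ 2 * Ch ^ 2).
Proof.
move=> hM hl hCf hCh.
set c := lm / M * Ch.
have hc : 0 <= c <= lm * Ch.
  split; first by apply: Rmult_le_pos => //; apply: Rmult_le_pos => //; apply: Rlt_le; apply: Rinv_0_lt_compat; lra.
  have := Rinv_le_contravar _ _ Rlt_0_1 hM; rewrite Rinv_1 => hinv.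
  rewrite /c /Rdiv; have := Rmult_le_pos _ _ hl hCh; nra.
have hL : (Cf + c) ^ 2 <= 2 * (Cf ^ 2 + lm ^ 2 * Ch ^ 2).
  by have := pow2_ge_0 (Cf - c); nra.
have hM3 : M * (2 * M + 1) <= 3 * M ^ 2.
  have : M * 1 <= M * M by apply: Rmult_le_compat_l; lra.
  nra.
have hM0 : 0 <= M * (2 * M + 1) by nra.
have -> : M * ((2 * M + 1) * gm ^ 2 * (Cf + c) ^ 2) = gm ^ 2 * (M * (2 * M + 1) * (Cf + c) ^ 2)
  by ring.
have -> : 6 * M ^ 2 * gm ^ 2 * (Cf ^ 2 + lm ^ 2 * Ch ^ 2)
          = gm ^ 2 * (3 * M ^ 2 * (2 * (Cf ^ 2 + lm ^ 2 * Ch ^ 2))) by ring.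
apply: Rmult_le_compat_l; first exact: pow2_ge_0.
exact: Rmult_le_compat _ _ _ _ hM0 (pow2_ge_0 (Cf + c)) hM3 hL.
Qed.

Lemma contraction_rates {M p : R} : 1 <= M -> 0 < p <= 2 * M ->
  0 < p / (2 * M) <= 1 /\ 4 * (p / (2 * M)) <= p / M + p.
Proof.
move=> hM hp; split; first split.
- by apply: Rdiv_lt_0_compat; lra.
- by apply: (Rmult_le_reg_r (2 * M)); [lra | field_simplify; lra].
- have : p / M <= p by apply: (Rmult_le_reg_r M); [lra | field_simplify; nra].
  have -> : 4 * (p / (2 * M)) = 2 * (p / M) by field; lra.
  lra.
Qed.

Lemma IRIG_in_X {n} {X : vec n -> Prop} {m fs h gam lam xo z} k :
  (0 < m)%N -> IRIG X m fs h gam lam xo z -> X (xo k).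
Proof.
move=> hm [X0 HI]; case: k => [//|k].
have [_ [-> Hst]] := HI k.
have [gf [gh [_ [_ [Xp _]]]]] := Hst m.-1 ltac:(by rewrite ltn_predL).
by rewrite prednK in Xp.
Qed.

Lemma IRIG_cycle_bound {n} {X : vec n -> Prop} {m fs h mu Cf Ch gam lam xo z k y} :
  (0 < m)%N -> convex_set X -> (forall i, (i < m)%N -> convex_fun (fs i)) ->
  0 <= mu -> strongly_convex h mu ->
  (forall i x g, (i < m)%N -> X x -> subgrad (fs i) x g -> norm g <= Cf) ->
  (forall x g, X x -> subgrad h x g -> norm g <= Ch) ->
  0 < gam k -> 0 < lam k -> IRIG X m fs h gam lam xo z -> X y ->
  norm2 (vsub (xo k.+1) y) <= (1 - gam k * lam k * mu / INR m) * norm2 (vsub (xo k) y)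
    - 2 * gam k * (fsum m fs (xo k) + lam k * h (xo k) - (fsum m fs y + lam k * h y))
    + INR m * ((2 * INR m + 1) * gam k ^ 2 * (Cf + lam k / INR m * Ch) ^ 2).
Proof.
move=> hm cX cfs hmu sh hCf hCh hg hl hI Xy.
have [Hx0 [Hxm Hst]] := proj2 hI k.
have hM : 0 < INR m by apply: lt_0_INR; apply/ltP.
set c := lam k / INR m.
have hc : 0 <= c by apply: Rlt_le; apply: Rdiv_lt_0_compat.
have Xz i : (i <= m)%N -> X (z k i).
  case: i => [_|i hi]; first by rewrite Hx0; exact: IRIG_in_X k hm hI.
  by have [gf [gh [_ [_ [Xp _]]]]] := Hst i hi.
have X0 := Xz 0%N isT.
have hCf0 := subgrad_bound_ge0 (cfs 0%N hm) (fun x g => hCf 0%N x g hm) X0.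
have hCh0 := subgrad_bound_ge0 (proj1 sh) hCh X0.
have lip i a b : (i < m)%N -> X b ->
    fs i b + c * h b - (fs i a + c * h a) <= (Cf + c * Ch) * norm (vsub b a).
  move=> hi Xb.
  have := subgrad_lipschitz a (cfs i hi) (fun x g => hCf i x g hi) Xb.
  have := Rmult_le_compat_l c _ _ hc (subgrad_lipschitz a (proj1 sh) hCh Xb).
  lra.
have step i : (i < m)%N -> exists G, strong_subgrad (fun v => fs i v + c * h v) (c * mu) (z k i) G
    /\ norm G <= Cf + c * Ch /\ is_proj X (vsub (z k i) (vscale (gam k) G)) (z k i.+1).
  move=> hi; have [gf [gh [sf [sgh hp]]]] := Hst i hi.
  exists (vadd gf (vscale c gh)); split; first exact: strong_subgrad_add_scale.
  split=> //; have Xi := Xz i (ltnW hi).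
  have := norm_add_le gf (vscale c gh); rewrite norm_scale Rabs_pos_eq //.
  have := hCf i _ _ hi Xi sf; have := Rmult_le_compat_l c _ _ hc (hCh _ _ Xi sgh).
  lra.
have := @cycle_bound n m X (fun i v => fs i v + c * h v) (c * mu) (Cf + c * Ch) (gam k) (z k)
  cX (Rmult_le_pos _ _ hc hmu) hg ltac:(nra) X0 lip step y hm Xy.
rewrite Hxm -Hx0 big_component_gap (_ : INR m * c = lam k); last by rewrite /c; field; lra.
rewrite (_ : gam k * (c * mu) = gam k * lam k * mu / INR m) //.
by rewrite /c; field; lra.
Qed.

Theorem lemma2 (n m : nat) (X : vec n -> Prop) (fs : nat -> vec n -> R)
  (h : vec n -> R) (mu_h Cf Ch : R) (xstar : R -> vec n)
  (gam lam : nat -> R) (xo : nat -> vec n) (z : nat -> nat -> vec n) (k : nat) :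
  (0 < m)%nat ->
  (exists x, X x) -> compact_set X -> convex_set X ->
  (forall i, (i < m)%nat -> convex_fun (fs i)) ->
  0 < mu_h -> strongly_convex h mu_h ->
  (forall l, 0 < l -> is_argmin X (fun x => fsum m fs x + l * h x) (xstar l)) ->
  (forall i x g, (i < m)%nat -> X x -> subgrad (fs i) x g -> norm g <= Cf) ->
  (forall x g, X x -> subgrad h x g -> norm g <= Ch) ->
  (forall j, 0 < gam j) -> (forall j, 0 < lam j) ->
  IRIG X m fs h gam lam xo z ->
  (1 <= k)%nat ->
  0 < gam k * lam k * mu_h <= 2 * INR m ->
  norm2 (vsub (xo (S k)) (xstar (lam k))) <=
    (1 - gam k * lam k * mu_h / (2 * INR m)) *
      norm2 (vsub (xo k) (xstar (lam (k - 1)%nat)))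
    + 3 * INR m * Ch ^ 2 / (gam k * lam k * mu_h ^ 3)
      * (Rabs (1 - lam (k - 1)%nat / lam k)) ^ 2
    + 6 * (INR m) ^ 2 * (gam k) ^ 2 * (Cf ^ 2 + (lam k) ^ 2 * Ch ^ 2).
Proof.
move=> hm _ _ cX cfs hmu sh Hstar hCf hCh hgam hlam hI _ [hpos hle].
have hM : 1 <= INR m by apply: (le_INR 1); apply/leP.
have hgk := hgam k; have hlk := hlam k; have hlk' := hlam (k - 1)%N.
have Xk := IRIG_in_X k hm hI.
have cf := fsum_convex cfs.
have hCf0 := subgrad_bound_ge0 (cfs 0%N hm) (fun x g => hCf 0%N x g hm) Xk.
have hCh0 := subgrad_bound_ge0 (proj1 sh) hCh Xk.
have hcyc := IRIG_cycle_bound hm cX cfs (Rlt_le _ _ hmu) sh hCf hCh hgk hlk hI (proj1 (Hstar _ hlk)).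
have hgrow := argmin_growth cX cf sh hlk (Hstar _ hlk) Xk.
have hdrift := argmin_drift cX cf sh hmu hlk hlk' hCh (Hstar _ hlk) (Hstar _ hlk').
have [ha hb] := contraction_rates hM (conj hpos hle).
have := norm2_add_shrink (vsub (xo k) (xstar (lam (k - 1)%N)))
  (vsub (xstar (lam (k - 1)%N)) (xstar (lam k))) ha hb.
rewrite (_ : vadd _ _ = vsub (xo k) (xstar (lam k))); last by vec_ext.
have := drift_term_le (lm' := lam (k - 1)%N) (C := Ch) (Rlt_le_trans _ _ _ Rlt_0_1 hM) hgk hlk hmu
  (norm_ge0 _) hdrift.
rewrite norm_sq.
have := noise_term_le (gam k) hM (Rlt_le _ _ hlk) hCf0 hCh0.
have := Rmult_le_compat_l (2 * gam k) _ _ ltac:(lra) hgrow.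
lra.
Qed.
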